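(* Let $T:X\rightrightarrows X^*$ be a pseudomonotone operator and let $P(T)$ be the set of all maximal pseudomonotone operators $M:X\rightrightarrows X^*$ with $T\subset M$. Then (1) $T^\rho=\bigcup_{M\in P(T)}M$; (2) $T^{\rho\rho}=\bigcap_{M\in P(T)}M$; (3) $T$ is maximal pseudomonotone if and only if $T=T^\rho$.
   Context: $X$ is a real Banach space with dual $X^*$ and pairing $\langle x,x^*\rangle=x^*(x)$. A multivalued operator $T:X\rightrightarrows X^*$ is identified with its graph $T\subset X\times X^*$. For $(x,x^* ),(y,y^* )\in X\times X^*$, write $(x,x^* )\sim_p(y,y^* )$ if either $\min\{\langle x-y,y^*\rangle,\langle y-x,x^*\rangle\}<0$ or $\langle x-y,y^*\rangle=\langle y-x,x^*\rangle=0$. The pseudomonotone polar of $T$ is $T^\rho=\{(x,x^* )\in X\times X^*: (x,x^* )\sim_p(y,y^* )\ \forall (y,y^* )\in T\}$, and $T^{\rho\rho}=(T^\rho)^\rho$. $T$ is pseudomonotone if for all $(x,x^* ),(y,y^* )\in T$, $\langle y-x,x^*\rangle\ge0$ implies $\langle y-x,y^*\rangle\ge0$. $T$ is maximal pseudomonotone if it is pseudomonotone and for every pseudomonotone $S$ with $T\subset S$ one has $S=T$. *)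

From Stdlib Require Import Reals.
Open Scope R_scope.

Record BanachSpace := mkBanachSpace {
  bs_car :> Type;
  bs_zero : bs_car;
  bs_add : bs_car -> bs_car -> bs_car;
  bs_opp : bs_car -> bs_car;
  bs_scal : R -> bs_car -> bs_car;
  bs_norm : bs_car -> R;
  bs_addA : forall x y z, bs_add x (bs_add y z) = bs_add (bs_add x y) z;
  bs_addC : forall x y, bs_add x y = bs_add y x;
  bs_add0 : forall x, bs_add x bs_zero = x;
  bs_addN : forall x, bs_add x (bs_opp x) = bs_zero;
  bs_scalA : forall a b x, bs_scal a (bs_scal b x) = bs_scal (a * b) x;
  bs_scal1 : forall x, bs_scal 1 x = x;
  bs_scalDr : forall a x y, bs_scal a (bs_add x y) = bs_add (bs_scal a x) (bs_scal a y);
  bs_scalDl : forall a b x, bs_scal (a + b) x = bs_add (bs_scal a x) (bs_scal b x);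
  bs_norm_eq0 : forall x, bs_norm x = 0 -> x = bs_zero;
  bs_norm_triangle : forall x y, bs_norm (bs_add x y) <= bs_norm x + bs_norm y;
  bs_norm_scal : forall a x, bs_norm (bs_scal a x) = Rabs a * bs_norm x;
  bs_complete : forall u : nat -> bs_car,
    (forall eps, 0 < eps -> exists N, forall m n, (N <= m)%nat -> (N <= n)%nat ->
        bs_norm (bs_add (u m) (bs_opp (u n))) < eps) ->
    exists l, forall eps, 0 < eps -> exists N, forall n, (N <= n)%nat ->
        bs_norm (bs_add (u n) (bs_opp l)) < eps
}.

Definition bs_sub (X : BanachSpace) (x y : X) : X := bs_add X x (bs_opp X y).

Record dual (X : BanachSpace) := mkDual {
  dfun :> X -> R;
  dfun_add : forall x y, dfun (bs_add X x y) = dfun x + dfun y;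
  dfun_scal : forall a x, dfun (bs_scal X a x) = a * dfun x;
  dfun_bounded : exists M, forall x, Rabs (dfun x) <= M * bs_norm X x
}.

Definition pairing (X : BanachSpace) (x : X) (xs : dual X) : R := dfun X xs x.

Definition operator (X : BanachSpace) := X -> dual X -> Prop.

Definition op_subset (X : BanachSpace) (S T : operator X) : Prop :=
  forall x xs, S x xs -> T x xs.

Definition op_eq (X : BanachSpace) (S T : operator X) : Prop :=
  forall x xs, S x xs <-> T x xs.

Definition rel_p (X : BanachSpace) (x : X) (xs : dual X) (y : X) (ys : dual X) : Prop :=
  Rmin (pairing X (bs_sub X x y) ys) (pairing X (bs_sub X y x) xs) < 0 \/
  (pairing X (bs_sub X x y) ys = 0 /\ pairing X (bs_sub X y x) xs = 0).

Definition ps_polar (X : BanachSpace) (T : operator X) : operator X :=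
  fun x xs => forall y ys, T y ys -> rel_p X x xs y ys.

Definition pseudomonotone (X : BanachSpace) (T : operator X) : Prop :=
  forall x xs y ys, T x xs -> T y ys ->
    pairing X (bs_sub X y x) xs >= 0 -> pairing X (bs_sub X y x) ys >= 0.

Definition max_pseudomonotone (X : BanachSpace) (T : operator X) : Prop :=
  pseudomonotone X T /\
  forall S : operator X, pseudomonotone X S -> op_subset X T S -> op_eq X S T.

(* Pseudomonotonicity of an operator S says exactly that any two points of its
   graph are related by ~_p, and S^rho collects the points related to all of S.
   Hence a pseudomonotone S is contained in S^rho, and a point of T^rho can be
   adjoined to T without losing pseudomonotonicity; Zorn's lemma then puts it
   into a maximal extension, which gives (1).  A maximal M satisfies M = M^rho,
   so for M in P(T) we get M <= T^rho and T^rhorho <= M^rho = M; together with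
   (1) this gives (2), and (3) is the characterisation M maximal <-> M = M^rho. *)
From Stdlib Require Import Reals Lra Classical.
From mathcomp Require classical_sets.

Section PseudomonotonePolar.
Variable X : BanachSpace.

Lemma pairing_sub (x y : X) (f : dual X) :
  pairing X (bs_sub X x y) f = f x - f y.
Proof.
  unfold pairing, bs_sub. rewrite dfun_add.
  assert (f0 : dfun X f (bs_zero X) = 0).
  { pose proof (dfun_add X f (bs_zero X) (bs_zero X)) as H.
    rewrite bs_add0 in H. lra. }
  pose proof (dfun_add X f y (bs_opp X y)) as H. rewrite bs_addN, f0 in H.
  simpl. lra.
Qed.

Lemma rel_pE x xs y ys :
  rel_p X x xs y ys <->
  (ys x - ys y < 0 \/ xs y - xs x < 0) \/ (ys x - ys y = 0 /\ xs y - xs x = 0).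
Proof.
  unfold rel_p. rewrite !pairing_sub.
  unfold Rmin; destruct (Rle_dec (ys x - ys y) (xs y - xs x)); split; lra.
Qed.

Lemma rel_p_sym x xs y ys : rel_p X x xs y ys -> rel_p X y ys x xs.
Proof. rewrite !rel_pE. lra. Qed.

Lemma rel_p_refl x xs : rel_p X x xs x xs.
Proof. apply rel_pE. lra. Qed.

Lemma pseudomonotoneP (S : operator X) :
  pseudomonotone X S <->
  (forall x xs y ys, S x xs -> S y ys -> rel_p X x xs y ys).
Proof.
  split.
  - intros HS x xs y ys Sx Sy. apply rel_pE.
    pose proof (HS x xs y ys Sx Sy) as Hxy. pose proof (HS y ys x xs Sy Sx) as Hyx.
    rewrite !pairing_sub in Hxy, Hyx.
    destruct (Rle_lt_dec 0 (xs y - xs x)), (Rle_lt_dec 0 (ys x - ys y)); lra.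
  - intros HS x xs y ys Sx Sy. specialize (HS x xs y ys Sx Sy).
    rewrite rel_pE in HS. rewrite !pairing_sub. lra.
Qed.

Lemma pseudomonotone_sub_polar (S : operator X) :
  pseudomonotone X S -> op_subset X S (ps_polar X S).
Proof. intros HS x xs Sx y ys Sy. exact (proj1 (pseudomonotoneP S) HS x xs y ys Sx Sy). Qed.

Lemma ps_polar_antitone (S T : operator X) :
  op_subset X S T -> op_subset X (ps_polar X T) (ps_polar X S).
Proof. intros ST x xs Hx y ys Sy. exact (Hx y ys (ST y ys Sy)). Qed.

Definition add_point (S : operator X) (x0 : X) (xs0 : dual X) : operator X :=
  fun x xs => S x xs \/ (x = x0 /\ xs = xs0).

Lemma pseudomonotone_add_point (S : operator X) x xs :
  pseudomonotone X S -> ps_polar X S x xs -> pseudomonotone X (add_point S x xs).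
Proof.
  intros HS Hx. apply pseudomonotoneP.
  intros a b c d [Sa | [-> ->]] [Sc | [-> ->]].
  - exact (proj1 (pseudomonotoneP S) HS a b c d Sa Sc).
  - exact (rel_p_sym _ _ _ _ (Hx a b Sa)).
  - exact (Hx c d Sc).
  - apply rel_p_refl.
Qed.

Lemma max_pseudomonotone_polar_sub (M : operator X) :
  max_pseudomonotone X M -> op_subset X (ps_polar X M) M.
Proof.
  intros [HM Mmax] x xs Hx.
  apply (Mmax (add_point M x xs) (pseudomonotone_add_point M x xs HM Hx)).
  - intros a b Ma. left. exact Ma.
  - right. split; reflexivity.
Qed.

Lemma max_pseudomonotoneP (S : operator X) :
  max_pseudomonotone X S <-> op_eq X S (ps_polar X S).
Proof.
  split.
  - intros HS x xs. split.
    + apply pseudomonotone_sub_polar, HS.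
    + apply max_pseudomonotone_polar_sub, HS.
  - intros Seq.
    assert (HS : pseudomonotone X S).
    { apply pseudomonotoneP. intros x xs y ys Sx Sy. exact (proj1 (Seq x xs) Sx y ys Sy). }
    split; [exact HS |].
    intros S' HS' SS' x xs. split; [| apply SS'].
    (* S' <= S'^rho <= S^rho = S *)
    intros S'x. apply Seq.
    exact (ps_polar_antitone S S' SS' x xs (pseudomonotone_sub_polar S' HS' x xs S'x)).
Qed.

Lemma pseudomonotone_maximal_extension (T : operator X) :
  pseudomonotone X T -> exists M, max_pseudomonotone X M /\ op_subset X T M.
Proof.
  intros HT.
  (* Zorn is applied to sets A with A u T pseudomonotone, so that the empty
     chain is admissible. *)
  pose (ext := fun (A : (X * dual X)%type -> Prop) =>
          fun x xs => A (x, xs) \/ T x xs).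
  destruct (@classical_sets.Zorn_bigcup (X * dual X)%type
              (fun A => pseudomonotone X (ext A))) as [A [HA Amax]].
  - intros F FP Ftot. apply pseudomonotoneP.
    intros x xs y ys [[B FB Bx] | Tx] [[C FC Cy] | Ty].
    + destruct (Ftot B C FB FC) as [BC | CB].
      * apply (proj1 (pseudomonotoneP _) (FP C FC)); left; [apply BC |]; assumption.
      * apply (proj1 (pseudomonotoneP _) (FP B FB)); left; [| apply CB]; assumption.
    + apply (proj1 (pseudomonotoneP _) (FP B FB)); [left | right]; assumption.
    + apply (proj1 (pseudomonotoneP _) (FP C FC)); [right | left]; assumption.
    + apply (proj1 (pseudomonotoneP _) HT); assumption.
  - exists (ext A). split; [split; [exact HA |] |].
    + intros S HS AS x xs. split; [| apply AS].
      intros Sx. apply NNPP. intros notAx.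
      apply (Amax (fun p => S (fst p) (snd p))).
      * split.
        -- intros [a b] Aab. apply AS. left. exact Aab.
        -- intros SA. apply notAx. left. exact (SA (x, xs) Sx).
      * apply pseudomonotoneP. intros a b c d Sa Sc.
        assert (extS : forall u us, ext (fun p => S (fst p) (snd p)) u us -> S u us).
        { intros u us [Su | Tu]; [exact Su | apply AS; right; exact Tu]. }
        exact (proj1 (pseudomonotoneP S) HS a b c d (extS a b Sa) (extS c d Sc)).
    + intros x xs Tx. right. exact Tx.
Qed.

Lemma max_extension_sub_polar (T M : operator X) :
  max_pseudomonotone X M -> op_subset X T M -> op_subset X M (ps_polar X T).
Proof.
  intros HM TM x xs Mx.
  apply (ps_polar_antitone T M TM), (pseudomonotone_sub_polar M (proj1 HM)), Mx.
Qed.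

Lemma ps_polar_eq_union_max (T : operator X) :
  pseudomonotone X T ->
  op_eq X (ps_polar X T)
    (fun x xs => exists M, max_pseudomonotone X M /\ op_subset X T M /\ M x xs).
Proof.
  intros HT x xs. split.
  - intros Hx.
    destruct (pseudomonotone_maximal_extension (add_point T x xs)
                (pseudomonotone_add_point T x xs HT Hx)) as [M [HM TM]].
    exists M. split; [exact HM | split].
    + intros a b Ta. apply TM. left. exact Ta.
    + apply TM. right. split; reflexivity.
  - intros [M [HM [TM Mx]]]. exact (max_extension_sub_polar T M HM TM x xs Mx).
Qed.

Lemma ps_bipolar_eq_inter_max (T : operator X) :
  pseudomonotone X T ->
  op_eq X (ps_polar X (ps_polar X T))
    (fun x xs => forall M, max_pseudomonotone X M -> op_subset X T M -> M x xs).
Proof.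
  intros HT x xs. split.
  - intros Hx M HM TM.
    apply (max_pseudomonotone_polar_sub M HM).
    exact (ps_polar_antitone M _ (max_extension_sub_polar T M HM TM) x xs Hx).
  - intros Hx y ys Hy.
    destruct (proj1 (ps_polar_eq_union_max T HT y ys) Hy) as [M [HM [TM My]]].
    exact (proj1 (pseudomonotoneP M) (proj1 HM) x xs y ys (Hx M HM TM) My).
Qed.

End PseudomonotonePolar.

Theorem mainTheorem9 (X : BanachSpace) (T : operator X) :
  pseudomonotone X T ->
  (* (1) T^rho = union of all maximal pseudomonotone M containing T *)
  op_eq X (ps_polar X T)
    (fun x xs => exists M : operator X,
        max_pseudomonotone X M /\ op_subset X T M /\ M x xs) /\
  (* (2) T^{rho rho} = intersection of all such M *)
  op_eq X (ps_polar X (ps_polar X T))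
    (fun x xs => forall M : operator X,
        max_pseudomonotone X M -> op_subset X T M -> M x xs) /\
  (* (3) T maximal pseudomonotone iff T = T^rho *)
  (max_pseudomonotone X T <-> op_eq X T (ps_polar X T)).
Proof.
  intros HT. split; [| split].
  - exact (ps_polar_eq_union_max X T HT).
  - exact (ps_bipolar_eq_inter_max X T HT).
  - exact (max_pseudomonotoneP X T).
Qed.
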